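(* Let $\mathscr{G}_n$ be a simple, verbose $\upsilon$-reduction grammar, let $\varphi = \lambda(T[\Uparrow(S)])$, and let $t = (\lambda a)[s][s_1]\cdots[s_w]$ be a $\lambda\upsilon$-term ($w\ge 0$). Then $t$ normalises in exactly $n+1$ normal-order $\upsilon$-steps if and only if there exists a unique term $\pi = (\lambda(\alpha[\Uparrow(\sigma)]))[\sigma_1]\cdots[\sigma_w] \in \Delta_\varphi^n$ such that $t \in L\big((\lambda\alpha)[\sigma][\sigma_1]\cdots[\sigma_w]\big)$.
   Context: $\lambda\upsilon$-terms: $t ::= \underline{n} \mid \lambda t \mid t\,t \mid t[s]$; substitutions $s ::= t/ \mid \Uparrow(s) \mid\ \uparrow$; indices $\underline{n} ::= \underline{0} \mid \mathtt{S}\,\underline{n}$. The $\upsilon$-rules: $(a b)[s] \to a[s](b[s])$; $(\lambda a)[s] \to \lambda(a[\Uparrow(s)])$; $\underline{0}[a/] \to a$; $(\mathtt{S}\,\underline{n})[a/] \to \underline{n}$; $\underline{0}[\Uparrow(s)] \to \underline{0}$; $(\mathtt{S}\,\underline{n})[\Uparrow(s)] \to \underline{n}[s][\uparrow]$; $\underline{n}[\uparrow] \to \mathtt{S}\,\underline{n}$. A term normalises in $k$ steps if leftmost-outermost $\upsilon$-reduction reaches a $\upsilon$-normal form in exactly $k$ steps. $\mathscr{F}$ is the ranked alphabet of $\lambda\upsilon$ symbols (application, closure $\cdot[\cdot]$ binary; $\lambda$, $\cdot/$, $\Uparrow$, $\mathtt{S}$ unary; $\uparrow,\underline{0}$ constants);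 $\mathscr{T}_{\mathscr{F}}(X)$ is the set of terms over $\mathscr{F}$ with variables from $X$. In a regular tree grammar with productions $X\to\alpha$, $L(\alpha)$ is the set of ground terms derivable from $\alpha$; a non-terminal is unambiguous if each ground term has at most one derivation from it; a production $X\to\alpha$ is self-referencing if $X$ occurs in $\alpha$, regular otherwise. $\Lambda$ has productions $T \to N \mid \lambda T \mid T T \mid T[S]$, $S \to T/ \mid \Uparrow(S) \mid \uparrow$, $N \to \underline{0} \mid \mathtt{S} N$. A $\upsilon$-reduction grammar $\mathscr{G}_n$ has axiom $G_n$, non-terminals $\mathscr{N}_n=\{T,S,N,G_0,\dots,G_n\}$, contains all productions of $\Lambda$, and each $G_k$ ($0\le k\le n$) is unambiguous with $L(G_k)$ the set of terms normalising in exactly $k$ steps. It is simple if its self-referencing productions are productions of $\Lambda$ or of the form $G_k \to \lambda G_k \mid G_0 G_k \mid G_k G_0$, and each regular production $G_k\to\alpha$ has $\alpha \in \mathscr{T}_{\mathscr{F}}(\{T,S,N,G_0,\dots,G_{k-1}\})$. It is verbose if none of its productions has the form $X \to G_k[\sigma_1]\cdots[\sigma_w]$. A term has closure width $w$ if $w$ is the largest integer with the term of the form $\chi[\sigma_1]\cdots[\sigma_w]$. A finite intersection partition $\Pi(\alpha,\beta)$ of $\alpha,\beta\in\mathscr{T}_{\mathscr{F}}(\mathscr{N}_n)$ is a finite set of terms in $\mathscr{T}_{\mathscr{F}}(\mathscr{N}_n)$ with pairwise disjoint languages whose union of languages is $L(\alpha)\cap L(\beta)$. For a template $\varphi = \chi[\tau_1]\cdots[\tau_d]$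 of closure width $d$ and a production $X \to \gamma$ of $\mathscr{G}_n$ where $\gamma = \gamma'[\sigma_1]\cdots[\sigma_w]$ has closure width $w$, set $\Delta_\varphi(\gamma) = \Pi\big(\gamma,\ \chi[\tau_1]\cdots[\tau_d][S]\cdots[S]\big)$ with $w-d$ copies of $[S]$ appended, and $\Delta_\varphi^n = \bigcup\{\Delta_\varphi(\gamma) : G_n \to \gamma \text{ a production of } \mathscr{G}_n\}$. (Here $\varphi = \lambda(T[\Uparrow(S)])$ has closure width $d=0$.) *)

From Stdlib Require Import List Arith.
Import ListNotations.

(** Terms over the (single-sorted) ranked alphabet F with variables in X:
    T_F(X).  Ground terms are T_F(Empty_set). *)
Inductive tree (X : Type) : Type :=
| Var   : X -> tree X
| App   : tree X -> tree X -> tree X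
| Clos  : tree X -> tree X -> tree X          (* a[s] *)
| Lam   : tree X -> tree X
| Slash : tree X -> tree X                    (* a/ *)
| Lift  : tree X -> tree X                    (* Uparrow(s) *)
| Succ  : tree X -> tree X
| Shift : tree X                              (* uparrow *)
| Zero  : tree X.
Arguments Var {X}. Arguments App {X}. Arguments Clos {X}. Arguments Lam {X}.
Arguments Slash {X}. Arguments Lift {X}. Arguments Succ {X}.
Arguments Shift {X}. Arguments Zero {X}.

Definition gterm := tree Empty_set.

Inductive sort := STerm | SSubst | SIndex.

Fixpoint wsorted (k : sort) (t : gterm) : bool :=
  match k, t with
  | SIndex, Zero => true
  | SIndex, Succ m => wsorted SIndex m
  | STerm, Zero => true
  | STerm, Succ m => wsorted SIndex m
  | STerm, Lam a => wsorted STerm a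
  | STerm, App a b => wsorted STerm a && wsorted STerm b
  | STerm, Clos a s => wsorted STerm a && wsorted SSubst s
  | SSubst, Slash a => wsorted STerm a
  | SSubst, Lift s => wsorted SSubst s
  | SSubst, Shift => true
  | _, _ => false
  end.

Definition lterm (t : gterm) : Prop := wsorted STerm t = true.
Definition is_index (t : gterm) : bool := wsorted SIndex t.

Definition root_step (t : gterm) : option gterm :=
  match t with
  | Clos (App a b) s => Some (App (Clos a s) (Clos b s))
  | Clos (Lam a) s => Some (Lam (Clos a (Lift s)))
  | Clos Zero (Slash a) => Some a
  | Clos (Succ m) (Slash _) => Some m
  | Clos Zero (Lift _) => Some Zero
  | Clos (Succ m) (Lift s) => Some (Clos (Clos m s) Shift)
  | Clos m Shift => if is_index m then Some (Succ m) else None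
  | _ => None
  end.

(** One leftmost-outermost (normal-order) upsilon-step; [None] iff the term
    is in upsilon-normal form. *)
Fixpoint lo_step (t : gterm) : option gterm :=
  match root_step t with
  | Some u => Some u
  | None =>
    match t with
    | App a b => match lo_step a with
                 | Some a' => Some (App a' b)
                 | None => option_map (App a) (lo_step b) end
    | Clos a b => match lo_step a with
                  | Some a' => Some (Clos a' b)
                  | None => option_map (Clos a) (lo_step b) end
    | Lam a => option_map Lam (lo_step a)
    | Slash a => option_map Slash (lo_step a)
    | Lift a => option_map Lift (lo_step a)
    | Succ a => option_map Succ (lo_step a)
    | _ => None
    end
  end.

Fixpoint lo_iter (k : nat) (t : gterm) : option gterm :=
  match k with
  | 0 => Some t
  | S k' => match lo_step t with Some u => lo_iter k' u | None => None end
  end.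

Definition normalises_in (k : nat) (t : gterm) : Prop :=
  match lo_iter k t with
  | Some u => lo_step u = None
  | None => False
  end.

Inductive nt := NT | NS | NN | NG (k : nat).

Definition production := (nt * tree nt)%type.
Definition grammar := list production.

Fixpoint all_nts (p : nt -> Prop) (a : tree nt) : Prop :=
  match a with
  | Var X => p X
  | App a b | Clos a b => all_nts p a /\ all_nts p b
  | Lam a | Slash a | Lift a | Succ a => all_nts p a
  | Shift | Zero => True
  end.

Definition occurs (X : nt) (a : tree nt) : Prop := ~ all_nts (fun Y => Y <> X) a.

(** Derivation trees: at each expansion of a non-terminal, the production used
    is recorded. *)
Inductive dtree :=
| DExp : tree nt -> dtree -> dtree
| DApp : dtree -> dtree -> dtree
| DClos : dtree -> dtree -> dtree
| DLam : dtree -> dtree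
| DSlash : dtree -> dtree
| DLift : dtree -> dtree
| DSucc : dtree -> dtree
| DShift : dtree
| DZero : dtree.

Inductive valid (P : grammar) : tree nt -> gterm -> dtree -> Prop :=
| v_var X a g d : In (X, a) P -> valid P a g d -> valid P (Var X) g (DExp a d)
| v_app a b g h d e : valid P a g d -> valid P b h e ->
    valid P (App a b) (App g h) (DApp d e)
| v_clos a b g h d e : valid P a g d -> valid P b h e ->
    valid P (Clos a b) (Clos g h) (DClos d e)
| v_lam a g d : valid P a g d -> valid P (Lam a) (Lam g) (DLam d)
| v_slash a g d : valid P a g d -> valid P (Slash a) (Slash g) (DSlash d)
| v_lift a g d : valid P a g d -> valid P (Lift a) (Lift g) (DLift d)
| v_succ a g d : valid P a g d -> valid P (Succ a) (Succ g) (DSucc d)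
| v_shift : valid P Shift Shift DShift
| v_zero : valid P Zero Zero DZero.

Definition Lang (P : grammar) (a : tree nt) (g : gterm) : Prop :=
  exists d, valid P a g d.

Definition unambiguous (P : grammar) (X : nt) : Prop :=
  forall g d1 d2, valid P (Var X) g d1 -> valid P (Var X) g d2 -> d1 = d2.

Definition Lambda_prods : grammar :=
  [ (NT, Var NN); (NT, Lam (Var NT)); (NT, App (Var NT) (Var NT));
    (NT, Clos (Var NT) (Var NS));
    (NS, Slash (Var NT)); (NS, Lift (Var NS)); (NS, Shift);
    (NN, Zero); (NN, Succ (Var NN)) ].

Definition in_Nn (n : nat) (X : nt) : Prop :=
  match X with NG k => k <= n | _ => True end.

Definition reduction_grammar (n : nat) (P : grammar) : Prop :=
  (forall X a, In (X, a) P -> in_Nn n X /\ all_nts (in_Nn n) a) /\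
  (forall p, In p Lambda_prods -> In p P) /\
  (forall k, k <= n ->
     unambiguous P (NG k) /\
     forall g, Lang P (Var (NG k)) g <-> (lterm g /\ normalises_in k g)).

Definition simple (n : nat) (P : grammar) : Prop :=
  (forall X a, In (X, a) P -> occurs X a ->
     In (X, a) Lambda_prods \/
     exists k, X = NG k /\
       (a = Lam (Var (NG k)) \/ a = App (Var (NG 0)) (Var (NG k)) \/
        a = App (Var (NG k)) (Var (NG 0)))) /\
  (forall k a, In (NG k, a) P -> ~ occurs (NG k) a ->
     all_nts (fun Y => Y = NT \/ Y = NS \/ Y = NN \/
                       exists j, j < k /\ Y = NG j) a).

Fixpoint clos_head {X} (a : tree X) : tree X :=
  match a with Clos b _ => clos_head b | _ => a end.

Fixpoint clos_width {X} (a : tree X) : nat :=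
  match a with Clos b _ => S (clos_width b) | _ => 0 end.

Definition verbose (P : grammar) : Prop :=
  forall X a, In (X, a) P -> ~ exists k, clos_head a = Var (NG k).

Definition clos_chain {X} (b : tree X) (ss : list (tree X)) : tree X :=
  fold_left (fun acc s => Clos acc s) ss b.

Definition is_intersection_partition (n : nat) (P : grammar)
    (Pi : list (tree nt)) (a b : tree nt) : Prop :=
  (forall p, In p Pi -> all_nts (in_Nn n) p) /\
  (forall p1 p2, In p1 Pi -> In p2 Pi -> p1 <> p2 ->
     forall g, ~ (Lang P p1 g /\ Lang P p2 g)) /\
  (forall g, (exists p, In p Pi /\ Lang P p g) <-> (Lang P a g /\ Lang P b g)).

Definition phi : tree nt := Lam (Clos (Var NT) (Lift (Var NS))).

Definition template_target (tpl gamma : tree nt) : tree nt :=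
  clos_chain tpl (repeat (Var NS) (clos_width gamma - clos_width tpl)).

(** Delta^n_phi, given the chosen partitions Pi gamma = Delta_phi(gamma). *)
Definition Delta (n : nat) (P : grammar) (Pi : tree nt -> list (tree nt))
    (p : tree nt) : Prop :=
  exists gamma, In (NG n, gamma) P /\ In p (Pi gamma).

From Stdlib Require Import List Arith Lia Classical FinFun.
Import ListNotations.

(* The first normal-order step of t = (λa)[s][s_1]...[s_w] is the root step
   under the closures, giving t' = (λ(a[⇑s]))[s_1]...[s_w]; so t normalises
   in n+1 steps iff t' ∈ L(G_n).  A derivation of t' from G_n starts with a
   production G_n → γ, and γ has closure width exactly w: otherwise the head
   non-terminal of γ would derive a closure of t'.  It cannot be T (closing
   all terms by the same substitutions does not fix their reduction length),
   S (it derives non-terms), G_k (verbosity) or N (N derives only normal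
   forms, since some G_0-production must be S^j N).  Hence t' lies in the
   template language φ[S]...[S] and so in exactly one block π of Δ_φ(γ).
   Every non-terminal derives a term free of λ and ⇑, so π has no
   non-terminal on the spine of φ[S]...[S] and is (λ(α[⇑σ]))[σ_1]...[σ_w].
   Finally t ∈ L((λα)[σ][σ_1]...[σ_w]) iff t' ∈ L(π), and uniqueness comes
   from the unambiguity of G_n and the disjointness of the blocks. *)

Section ClosChain.
Context {X : Type}.
Implicit Types (u : tree X) (l : list (tree X)).

Lemma clos_chain_cons u g l : clos_chain u (g :: l) = clos_chain (Clos u g) l.
Proof. reflexivity. Qed.

Lemma clos_chain_snoc u l g : clos_chain u (l ++ [g]) = Clos (clos_chain u l) g.
Proof. unfold clos_chain. now rewrite fold_left_app. Qed.

Lemma clos_head_chain u l : clos_head (clos_chain u l) = clos_head u.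
Proof.
  revert u; induction l as [|g l IH]; intro u; [reflexivity|].
  now rewrite clos_chain_cons, IH.
Qed.

Lemma clos_width_chain u l : clos_width (clos_chain u l) = clos_width u + length l.
Proof.
  revert u; induction l as [|g l IH]; intro u; [simpl; lia|].
  rewrite clos_chain_cons, IH. simpl. lia.
Qed.

Lemma clos_width_clos_head u : clos_width (clos_head u) = 0.
Proof. induction u; auto. Qed.

Lemma clos_chain_head_decomp u :
  exists l, u = clos_chain (clos_head u) l /\ length l = clos_width u.
Proof.
  induction u as [| | u1 [l [E Hl]] u2 _ | | | | | |]; try (exists []; split; reflexivity).
  exists (l ++ [u2]). cbn [clos_head clos_width].
  rewrite clos_chain_snoc, <- E, length_app, Hl. simpl. split; [reflexivity | lia].
Qed.

Lemma clos_chain_inj u u' l l' :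
  length l = length l' -> clos_chain u l = clos_chain u' l' -> u = u' /\ l = l'.
Proof.
  revert u u' l'; induction l as [|g l IH]; intros u u' [|g' l'] Hlen E;
    try discriminate; [split; [exact E | reflexivity]|].
  rewrite !clos_chain_cons in E. injection Hlen as Hlen.
  destruct (IH _ _ _ Hlen E) as [Eu ->]. injection Eu as -> ->. split; reflexivity.
Qed.

Fixpoint succs (j : nat) u : tree X :=
  match j with 0 => u | S j => Succ (succs j u) end.

Lemma succs_Zero_inj i j : succs i Zero = succs j Zero -> i = j.
Proof.
  revert j; induction i as [|i IH]; intros [|j] E; try discriminate; [reflexivity|].
  injection E as E. now rewrite (IH j E).
Qed.

Fixpoint lam_lift_free u : bool :=
  match u with
  | Lam _ | Lift _ => false
  | App a b | Clos a b => lam_lift_free a && lam_lift_free b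
  | Slash a | Succ a => lam_lift_free a
  | Var _ | Shift | Zero => true
  end.

Lemma lam_lift_free_clos_head u : lam_lift_free u = true -> lam_lift_free (clos_head u) = true.
Proof.
  induction u; simpl; auto. intros H. apply Bool.andb_true_iff in H as [H _]. auto.
Qed.

Lemma lam_lift_free_shifts u k :
  lam_lift_free (clos_chain u (repeat Shift k)) = lam_lift_free u.
Proof.
  revert u; induction k as [|k IH]; intro u; [reflexivity|].
  cbn [repeat]. rewrite clos_chain_cons, IH. simpl. apply Bool.andb_true_r.
Qed.

End ClosChain.

Lemma all_nts_succs (p : nt -> Prop) j (a : tree nt) : all_nts p (succs j a) = all_nts p a.
Proof. induction j; simpl; auto. Qed.

Lemma lterm_clos_chain (u : gterm) l :
  lterm (clos_chain u l) <-> lterm u /\ Forall (fun g => wsorted SSubst g = true) l.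
Proof.
  revert u; induction l as [|g l IH]; intro u.
  - split; [intros H; split; [exact H | constructor] | intros [H _]; exact H].
  - rewrite clos_chain_cons, IH, Forall_cons_iff. unfold lterm; simpl.
    rewrite Bool.andb_true_iff. tauto.
Qed.

Lemma lo_step_Clos c g :
  lo_step (Clos c g) =
  match root_step (Clos c g) with
  | Some u => Some u
  | None => match lo_step c with
            | Some c' => Some (Clos c' g)
            | None => option_map (Clos c) (lo_step g) end
  end.
Proof. reflexivity. Qed.

Lemma lo_step_Succ x : lo_step (Succ x) = option_map Succ (lo_step x).
Proof. reflexivity. Qed.

Lemma root_step_Clos_closure c g : 0 < clos_width c -> root_step (Clos c g) = None.
Proof. intros Hc; destruct c; simpl in Hc; try lia. destruct g; reflexivity. Qed.

Lemma lo_step_clos_chain c c' l :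
  0 < clos_width c -> lo_step c = Some c' ->
  lo_step (clos_chain c l) = Some (clos_chain c' l).
Proof.
  intros Hc Hstep. induction l as [|g l IH] using rev_ind; [exact Hstep|].
  rewrite !clos_chain_snoc, lo_step_Clos, root_step_Clos_closure, IH; [reflexivity|].
  rewrite clos_width_chain. lia.
Qed.

Lemma lo_step_beta_chain (a s : gterm) ss :
  lo_step (clos_chain (Clos (Lam a) s) ss) = Some (clos_chain (Lam (Clos a (Lift s))) ss).
Proof. apply lo_step_clos_chain; [simpl; lia | reflexivity]. Qed.

Lemma lo_step_Lam_headed (u b : gterm) :
  clos_head u = Lam b -> 0 < clos_width u -> lo_step u <> None.
Proof.
  intros Hh Hw. destruct (clos_chain_head_decomp u) as ([|g l] & E & Hl); [simpl in Hl; lia|].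
  rewrite E, Hh, clos_chain_cons, (lo_step_clos_chain _ (Lam (Clos b (Lift g))));
    [discriminate | simpl; lia | reflexivity].
Qed.

Lemma lo_step_index_Shift (m : gterm) : is_index m = true -> lo_step (Clos m Shift) = Some (Succ m).
Proof. intros H; destruct m; try discriminate; [|reflexivity]. simpl in *. now rewrite H. Qed.

Lemma normalises_in_step k t t' :
  lo_step t = Some t' -> (normalises_in (S k) t <-> normalises_in k t').
Proof. intros H. unfold normalises_in. cbn [lo_iter]. now rewrite H. Qed.

Lemma normalises_in_unique k k' t : normalises_in k t -> normalises_in k' t -> k = k'.
Proof.
  unfold normalises_in. revert k' t.
  induction k as [|k IH]; intros [|k'] t H H'; cbn [lo_iter] in *;
    [reflexivity | rewrite H in H'; contradiction | rewrite H' in H; contradiction |].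
  destruct (lo_step t); [f_equal; eapply IH; eauto | contradiction].
Qed.

Lemma lo_iter_add i j t :
  lo_iter (i + j) t = match lo_iter i t with Some u => lo_iter j u | None => None end.
Proof. revert t; induction i; intro t; simpl; [reflexivity|]. destruct (lo_step t); auto. Qed.

Lemma lo_iter_Lam k x : lo_iter k (Lam x) = option_map Lam (lo_iter k x).
Proof.
  revert x; induction k as [|k IH]; intro x; [reflexivity|].
  cbn [lo_iter]. change (lo_step (Lam x)) with (option_map Lam (lo_step x)).
  destruct (lo_step x); simpl; auto.
Qed.

Lemma lo_iter_Lam_chain (b : gterm) l :
  lo_iter (length l) (clos_chain (Lam b) l) = Some (Lam (clos_chain b (map Lift l))).
Proof.
  revert b; induction l as [|g l IH]; intro b; [reflexivity|].
  cbn [length lo_iter].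
  rewrite clos_chain_cons, (lo_step_clos_chain _ (Lam (Clos b (Lift g))))
    by (simpl; lia || reflexivity).
  apply IH.
Qed.

Lemma lo_iter_Zero_lifts (l : list gterm) :
  lo_iter (length l) (clos_chain Zero (map Lift l)) = Some Zero.
Proof.
  induction l as [|g l IH]; [reflexivity|].
  cbn [length lo_iter map].
  rewrite clos_chain_cons, (lo_step_clos_chain _ Zero) by (simpl; lia || reflexivity).
  exact IH.
Qed.

Lemma normalises_Lam_Zero_chain l :
  normalises_in (length l + length l) (clos_chain (Lam Zero) l).
Proof.
  unfold normalises_in. rewrite lo_iter_add, lo_iter_Lam_chain, lo_iter_Lam, lo_iter_Zero_lifts.
  reflexivity.
Qed.

Lemma normalises_Lam_Lam_Zero_chain l :
  normalises_in (length l + length l + length l) (clos_chain (Lam (Lam Zero)) l).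
Proof.
  pose proof (lo_iter_Lam_chain Zero (map Lift l)) as Hinner.
  pose proof (lo_iter_Zero_lifts (map Lift l)) as Hzero.
  rewrite length_map in Hinner, Hzero.
  unfold normalises_in.
  rewrite !lo_iter_add, lo_iter_Lam_chain, lo_iter_Lam, Hinner. cbn [option_map].
  rewrite !lo_iter_Lam, Hzero. reflexivity.
Qed.

(* Closing a term by [gr] never fixes its reduction length: with [gr = []]
   compare [0] and [0[↑]], otherwise [λ0] and [λλ0] (2w versus 3w steps). *)
Lemma clos_chain_steps_not_constant (gr : list gterm) :
  ~ exists k, forall x, lterm x -> normalises_in k (clos_chain x gr).
Proof.
  intros [k Hk]. destruct gr as [|g gr].
  - assert (k = 0) by exact (normalises_in_unique _ _ _ (Hk Zero eq_refl)
                                (eq_refl : normalises_in 0 Zero)).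
    assert (k = 1) by exact (normalises_in_unique _ _ _ (Hk (Clos Zero Shift) eq_refl)
                                (eq_refl : normalises_in 1 (Clos Zero Shift))).
    lia.
  - pose proof (normalises_in_unique _ _ _ (Hk (Lam Zero) eq_refl)
                  (normalises_Lam_Zero_chain (g :: gr))).
    pose proof (normalises_in_unique _ _ _ (Hk (Lam (Lam Zero)) eq_refl)
                  (normalises_Lam_Lam_Zero_chain (g :: gr))).
    simpl in *. lia.
Qed.

Lemma succs_Zero_normal i : lterm (succs i Zero) /\ lo_step (succs i Zero) = None.
Proof.
  induction i as [|i [Ht Hn]]; [split; reflexivity|]. split.
  - destruct i; [reflexivity | exact Ht].
  - cbn [succs]. now rewrite lo_step_Succ, Hn.
Qed.

Lemma succs_normal_inv j (z : gterm) :
  lterm (succs j z) -> lo_step (succs j z) = None -> lterm z /\ lo_step z = None.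
Proof.
  intros Ht Hn. split.
  - destruct j as [|j]; [exact Ht|]. unfold lterm in Ht; simpl in Ht. clear Hn.
    induction j as [|j IH]; [destruct z; try discriminate; exact Ht | exact (IH Ht)].
  - clear Ht. induction j as [|j IH]; [exact Hn|]. apply IH.
    cbn [succs] in Hn. rewrite lo_step_Succ in Hn. now destruct (lo_step (succs j z)).
Qed.

Lemma normalises_Zero_shifts k i : normalises_in k (clos_chain (succs i Zero) (repeat Shift k)).
Proof.
  revert i; induction k as [|k IH]; intro i; [exact (proj2 (succs_Zero_normal i))|].
  change (normalises_in (S k) (clos_chain (Clos (succs i Zero) Shift) (repeat Shift k))).
  rewrite (normalises_in_step k _ (clos_chain (succs (S i) Zero) (repeat Shift k))); [apply IH|].
  apply lo_step_clos_chain; [simpl; lia|].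
  exact (lo_step_index_Shift _ (proj1 (succs_Zero_normal (S i)))).
Qed.

Lemma exists_not_In_injective {A} (f : nat -> A) (l : list A) :
  Injective f -> exists i, ~ In (f i) l.
Proof.
  intros Hf. apply not_all_not_ex. intros Hall.
  assert (Hincl : incl (map f (seq 0 (S (length l)))) l).
  { intros x Hx. apply in_map_iff in Hx as (i & <- & _). apply NNPP, Hall. }
  apply NoDup_incl_length in Hincl; [rewrite length_map, length_seq in Hincl; lia|].
  apply Injective_map_NoDup; [exact Hf | apply seq_NoDup].
Qed.

Section Derivations.
Context {P : grammar}.

Lemma Lang_Var {X a g} : In (X, a) P -> Lang P a g -> Lang P (Var X) g.
Proof. intros Hin [d Hd]. exists (DExp a d). now constructor. Qed.

Lemma Lang_App {x y g h} : Lang P x g -> Lang P y h -> Lang P (App x y) (App g h).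
Proof. intros [d1 H1] [d2 H2]. eexists. econstructor; eassumption. Qed.

Lemma Lang_Clos {x y g h} : Lang P x g -> Lang P y h -> Lang P (Clos x y) (Clos g h).
Proof. intros [d1 H1] [d2 H2]. eexists. econstructor; eassumption. Qed.

Lemma Lang_Lam {x g} : Lang P x g -> Lang P (Lam x) (Lam g).
Proof. intros [d H]. eexists. econstructor; eassumption. Qed.

Lemma Lang_Slash {x g} : Lang P x g -> Lang P (Slash x) (Slash g).
Proof. intros [d H]. eexists. econstructor; eassumption. Qed.

Lemma Lang_Lift {x g} : Lang P x g -> Lang P (Lift x) (Lift g).
Proof. intros [d H]. eexists. econstructor; eassumption. Qed.

Lemma Lang_Succ {x g} : Lang P x g -> Lang P (Succ x) (Succ g).
Proof. intros [d H]. eexists. econstructor; eassumption. Qed.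

Lemma Lang_Shift : Lang P Shift Shift.
Proof. eexists. constructor. Qed.

Lemma Lang_Zero : Lang P Zero Zero.
Proof. eexists. constructor. Qed.

Lemma Lang_succs j {x g} : Lang P x g -> Lang P (succs j x) (succs j g).
Proof. intros H; induction j; [exact H | now apply Lang_Succ]. Qed.

Lemma Lang_Var_inv {X g} : Lang P (Var X) g -> exists a, In (X, a) P /\ Lang P a g.
Proof. intros [d H]. inversion H; subst. eexists; split; [eassumption | eexists; eassumption]. Qed.

Lemma Lang_Lam_inv {x g} : Lang P (Lam x) g -> exists g1, g = Lam g1 /\ Lang P x g1.
Proof. intros [d H]. inversion H; subst. eexists; split; [reflexivity | eexists; eassumption]. Qed.

Lemma Lang_Clos_inv {x y g} :
  Lang P (Clos x y) g -> exists g1 g2, g = Clos g1 g2 /\ Lang P x g1 /\ Lang P y g2.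
Proof.
  intros [d H]. inversion H; subst.
  do 2 eexists; split; [reflexivity | split; eexists; eassumption].
Qed.

Lemma Lang_Lift_inv {x g} : Lang P (Lift x) g -> exists g1, g = Lift g1 /\ Lang P x g1.
Proof. intros [d H]. inversion H; subst. eexists; split; [reflexivity | eexists; eassumption]. Qed.

Lemma Lang_to_Lam {p g} :
  Lang P p (Lam g) -> (exists X, p = Var X) \/ exists p1, p = Lam p1 /\ Lang P p1 g.
Proof.
  intros [d H]. inversion H; subst; [left; eauto | right].
  eexists; split; [reflexivity | eexists; eassumption].
Qed.

Lemma Lang_to_Clos {p g h} :
  Lang P p (Clos g h) ->
  (exists X, p = Var X) \/ exists p1 p2, p = Clos p1 p2 /\ Lang P p1 g /\ Lang P p2 h.
Proof.
  intros [d H]. inversion H; subst; [left; eauto | right].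
  do 2 eexists; split; [reflexivity | split; eexists; eassumption].
Qed.

Lemma Lang_to_Lift {p g} :
  Lang P p (Lift g) -> (exists X, p = Var X) \/ exists p1, p = Lift p1 /\ Lang P p1 g.
Proof.
  intros [d H]. inversion H; subst; [left; eauto | right].
  eexists; split; [reflexivity | eexists; eassumption].
Qed.

Lemma Lang_clos_width_zero {h u} :
  Lang P h u -> clos_width h = 0 -> (exists X, h = Var X) \/ clos_width u = 0.
Proof. intros [d H] Hh. inversion H; subst; simpl in *; eauto; discriminate. Qed.

Lemma Lang_succs_Zero_inv {a i} :
  Lang P a (succs i Zero) -> a = succs i Zero \/ exists j X, a = succs j (Var X).
Proof.
  revert a; induction i as [|i IH]; intros a [d H]; inversion_clear H.
  - right. exists 0, X. reflexivity.
  - left. reflexivity.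
  - right. exists 0, X. reflexivity.
  - lazymatch goal with
    | Hv : valid _ _ _ _ |- _ => destruct (IH _ (ex_intro _ _ Hv)) as [-> | (j & X & ->)]
    end.
    + left. reflexivity.
    + right. exists (S j), X. reflexivity.
Qed.

Lemma Lang_clos_chain {h u sr gr} :
  Lang P h u -> Forall2 (Lang P) sr gr -> Lang P (clos_chain h sr) (clos_chain u gr).
Proof.
  intros Hu HF. revert h u Hu.
  induction HF as [|s g sr gr Hs _ IH]; intros h u Hu; [exact Hu|].
  rewrite !clos_chain_cons. apply IH, Lang_Clos; assumption.
Qed.

Lemma Lang_clos_chain_inv {h sr g} :
  Lang P (clos_chain h sr) g ->
  exists u gr, g = clos_chain u gr /\ Lang P h u /\ Forall2 (Lang P) sr gr.
Proof.
  revert h g; induction sr as [|s sr IH]; intros h g H.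
  - exists g, []. repeat split; [exact H | constructor].
  - rewrite clos_chain_cons in H. destruct (IH _ _ H) as (u' & gr & -> & Hu' & HF).
    destruct (Lang_Clos_inv Hu') as (u & g0 & -> & Hu & Hs).
    exists u, (g0 :: gr). repeat split; [exact Hu | constructor; assumption].
Qed.

Lemma unambiguous_production X gamma gamma' g :
  unambiguous P X -> In (X, gamma) P -> In (X, gamma') P ->
  Lang P gamma g -> Lang P gamma' g -> gamma = gamma'.
Proof.
  intros Hunamb Hin Hin' [d Hd] [d' Hd'].
  assert (E : DExp gamma d = DExp gamma' d') by (apply (Hunamb g); constructor; assumption).
  now injection E.
Qed.

Lemma Lang_clos_chain_contract alpha sigma sigmas (a s : gterm) ss :
  length sigmas = length ss ->
  Lang P (clos_chain (Clos (Lam alpha) sigma) sigmas) (clos_chain (Clos (Lam a) s) ss) <->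
  Lang P (clos_chain (Lam (Clos alpha (Lift sigma))) sigmas)
         (clos_chain (Lam (Clos a (Lift s))) ss).
Proof.
  intros Hlen; split; intros H; destruct (Lang_clos_chain_inv H) as (u & gr & E & Hu & HF);
    destruct (clos_chain_inj _ _ _ _ (eq_trans (eq_sym Hlen) (Forall2_length HF)) E)
      as [<- <-];
    apply Lang_clos_chain; try exact HF.
  - destruct (Lang_Clos_inv Hu) as (g1 & g2 & [= <- <-] & H1 & H2).
    destruct (Lang_Lam_inv H1) as (g3 & [= <-] & H3).
    apply Lang_Lam, Lang_Clos, Lang_Lift; assumption.
  - destruct (Lang_Lam_inv Hu) as (g1 & [= <-] & H1).
    destruct (Lang_Clos_inv H1) as (g2 & g3 & [= <- <-] & H2 & H3).
    destruct (Lang_Lift_inv H3) as (g4 & [= <-] & H4).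
    apply Lang_Clos; [apply Lang_Lam |]; assumption.
Qed.

Lemma Lang_phi_inv {g} : Lang P phi g -> exists g1 g2, g = Lam (Clos g1 (Lift g2)).
Proof.
  intros H. destruct (Lang_Lam_inv H) as (g' & -> & H').
  destruct (Lang_Clos_inv H') as (g1 & g2' & -> & _ & H2).
  destruct (Lang_Lift_inv H2) as (g2 & -> & _). eauto.
Qed.

Lemma lam_lift_free_not_template y l :
  lam_lift_free y = true -> ~ Lang P (clos_chain phi l) y.
Proof.
  intros Hy H. destruct (Lang_clos_chain_inv H) as (u & gr & -> & Hu & _).
  destruct (Lang_phi_inv Hu) as (g1 & g2 & ->).
  apply lam_lift_free_clos_head in Hy. rewrite clos_head_chain in Hy. discriminate.
Qed.

Definition sort_nt (k : sort) : nt :=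
  match k with STerm => NT | SSubst => NS | SIndex => NN end.

Hypothesis HLambda : forall p, In p Lambda_prods -> In p P.

Lemma Lambda_derives_wsorted k g : wsorted k g = true -> Lang P (Var (sort_nt k)) g.
Proof.
  assert (Hprod : forall X a, In (X, a) Lambda_prods -> forall g, Lang P a g -> Lang P (Var X) g)
    by (intros X a Hin g0; apply Lang_Var, HLambda, Hin).
  revert k; induction g as [[] | g1 IH1 g2 IH2 | g1 IH1 g2 IH2 | g IH | g IH | g IH | g IH | |];
    intros [] H; simpl in H; try discriminate;
    try (apply Bool.andb_true_iff in H as [H1 H2]).
  - apply (Hprod NT (App (Var NT) (Var NT))); [simpl; auto 10|].
    apply Lang_App; [apply (IH1 STerm) | apply (IH2 STerm)]; assumption.
  - apply (Hprod NT (Clos (Var NT) (Var NS))); [simpl; auto 10|].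
    apply Lang_Clos; [apply (IH1 STerm) | apply (IH2 SSubst)]; assumption.
  - apply (Hprod NT (Lam (Var NT))); [simpl; auto 10|]. apply Lang_Lam, (IH STerm), H.
  - apply (Hprod NS (Slash (Var NT))); [simpl; auto 10|]. apply Lang_Slash, (IH STerm), H.
  - apply (Hprod NS (Lift (Var NS))); [simpl; auto 10|]. apply Lang_Lift, (IH SSubst), H.
  - apply (Hprod NT (Var NN)); [simpl; auto 10|].
    apply (Hprod NN (Succ (Var NN))); [simpl; auto 10|]. apply Lang_Succ, (IH SIndex), H.
  - apply (Hprod NN (Succ (Var NN))); [simpl; auto 10|]. apply Lang_Succ, (IH SIndex), H.
  - apply (Hprod NS Shift); [simpl; auto 10|]. apply Lang_Shift.
  - apply (Hprod NT (Var NN)); [simpl; auto 10|].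
    apply (Hprod NN Zero); [simpl; auto 10|]. apply Lang_Zero.
  - apply (Hprod NN Zero); [simpl; auto 10|]. apply Lang_Zero.
Qed.

Lemma Lang_template_chain (a s : gterm) ss :
  lterm (clos_chain (Lam (Clos a (Lift s))) ss) ->
  Lang P (clos_chain phi (repeat (Var NS) (length ss))) (clos_chain (Lam (Clos a (Lift s))) ss).
Proof.
  intros H. apply lterm_clos_chain in H as [Hhead Hss].
  apply Bool.andb_true_iff in Hhead as [Ha Hs].
  apply Lang_clos_chain.
  - apply Lang_Lam, Lang_Clos; [apply (Lambda_derives_wsorted STerm), Ha |].
    apply Lang_Lift, (Lambda_derives_wsorted SSubst), Hs.
  - induction Hss as [|g ss Hg _ IH]; constructor;
      [apply (Lambda_derives_wsorted SSubst), Hg | exact IH].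
Qed.

End Derivations.

Section ReductionGrammar.
Variables (n : nat) (P : grammar).
Hypothesis HG : reduction_grammar n P.

Lemma Lang_NG k g : k <= n -> Lang P (Var (NG k)) g <-> lterm g /\ normalises_in k g.
Proof. intros Hk. apply (proj2 (proj2 HG) k Hk). Qed.

Lemma NG_unambiguous k : k <= n -> unambiguous P (NG k).
Proof. intros Hk. apply (proj2 (proj2 HG) k Hk). Qed.

Lemma Lambda_included : forall p, In p Lambda_prods -> In p P.
Proof. apply HG. Qed.

Lemma Lang_sort k g : wsorted k g = true -> Lang P (Var (sort_nt k)) g.
Proof. apply Lambda_derives_wsorted, Lambda_included. Qed.

Lemma lam_lift_free_witness X :
  in_Nn n X -> exists y, Lang P (Var X) y /\ lam_lift_free y = true.
Proof.
  destruct X as [ | | | k]; intros HX.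
  - exists Zero. split; [apply (Lang_sort STerm) |]; reflexivity.
  - exists Shift. split; [apply (Lang_sort SSubst) |]; reflexivity.
  - exists Zero. split; [apply (Lang_sort SIndex) |]; reflexivity.
  - exists (clos_chain Zero (repeat Shift k)). split; [|apply lam_lift_free_shifts].
    apply Lang_NG; [exact HX|]. split; [|exact (normalises_Zero_shifts k 0)].
    apply lterm_clos_chain. split; [reflexivity|].
    apply Forall_forall. intros g Hg. apply repeat_spec in Hg. now subst.
Qed.

Hypothesis Hsimple : simple n P.

Lemma simple_G0_succs_production j X :
  In (NG 0, succs j (Var X)) P -> X = NT \/ X = NS \/ X = NN.
Proof.
  intros Hin. destruct (classic (occurs (NG 0) (succs j (Var X)))) as [Hocc | Hreg].
  - exfalso. destruct (proj1 Hsimple _ _ Hin Hocc) as [HLam | (k & _ & [E | [E | E]])];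
      [simpl in HLam; intuition discriminate | destruct j; discriminate ..].
  - apply (proj2 Hsimple) in Hreg; [|exact Hin]. rewrite all_nts_succs in Hreg.
    destruct Hreg as [H | [H | [H | (i & Hi & _)]]]; auto. lia.
Qed.

(* [G_0] derives every index [S^i 0], but only finitely many of them can be
   spelled out by a production, so some [G_0]-production is [S^j X]; then
   [S^j u] is in normal form for each [u] derived from [X]. *)
Lemma N_derives_normal_forms u : Lang P (Var NN) u -> lo_step u = None.
Proof.
  intros Hu.
  destruct (exists_not_In_injective (fun i => (NG 0, succs i Zero)) P) as [i Hi].
  { intros i j E. injection E as E. exact (succs_Zero_inj i j E). }
  assert (Hg : Lang P (Var (NG 0)) (succs i Zero))
    by (apply Lang_NG; [lia | apply succs_Zero_normal]).
  destruct (Lang_Var_inv Hg) as (a & Hin & Ha).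
  destruct (Lang_succs_Zero_inv Ha) as [-> | (j & X & ->)]; [contradiction|].
  assert (HX : forall z, Lang P (Var X) z -> lterm z /\ lo_step z = None).
  { intros z Hz.
    destruct (proj1 (Lang_NG 0 _ (Nat.le_0_l n)) (Lang_Var Hin (Lang_succs j Hz))) as [Ht Hn].
    exact (succs_normal_inv j z Ht Hn). }
  destruct (simple_G0_succs_production _ _ Hin) as [-> | [-> | ->]].
  - destruct (HX (Clos Zero Shift)) as [_ H];
      [apply (Lang_sort STerm); reflexivity | discriminate].
  - destruct (HX Shift) as [H _]; [apply (Lang_sort SSubst); reflexivity | discriminate].
  - exact (proj2 (HX u Hu)).
Qed.

Hypothesis Hverbose : verbose P.

Lemma Gn_production_var_head X sigmas gr :
  In (NG n, clos_chain (Var X) sigmas) P -> Forall2 (Lang P) sigmas gr -> X = NN.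
Proof.
  intros Hin Hgr.
  assert (HX : forall z, Lang P (Var X) z ->
                 lterm (clos_chain z gr) /\ normalises_in n (clos_chain z gr)).
  { intros z Hz. apply Lang_NG; [lia|]. exact (Lang_Var Hin (Lang_clos_chain Hz Hgr)). }
  destruct X as [ | | | k]; [exfalso .. | reflexivity | exfalso].
  - apply (clos_chain_steps_not_constant gr). exists n.
    intros x Hx. apply HX, (Lang_sort STerm), Hx.
  - destruct (HX Shift) as [H _]; [apply (Lang_sort SSubst); reflexivity|].
    apply lterm_clos_chain in H as [H _]. discriminate.
  - apply (Hverbose _ _ Hin). exists k. apply clos_head_chain.
Qed.

Lemma production_width gamma (b : gterm) R :
  In (NG n, gamma) P -> Lang P gamma (clos_chain (Lam b) R) -> clos_width gamma = length R.
Proof.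
  intros Hin Hg.
  destruct (clos_chain_head_decomp gamma) as (sigmas & Egamma & Hlen).
  rewrite Egamma in Hin, Hg.
  destruct (Lang_clos_chain_inv Hg) as (u & gr & E & Hu & Hgr).
  assert (Hu0 : clos_width u = 0).
  { destruct (Nat.eq_dec (clos_width u) 0) as [|Hpos]; [assumption | exfalso].
    destruct (Lang_clos_width_zero Hu (clos_width_clos_head gamma)) as [[X EX] | Hw0];
      [|contradiction].
    rewrite EX in Hin, Hu. rewrite (Gn_production_var_head X sigmas gr Hin Hgr) in Hu.
    apply (lo_step_Lam_headed u b); [| lia | exact (N_derives_normal_forms u Hu)].
    rewrite <- (clos_head_chain u gr), <- E. apply clos_head_chain. }
  apply (f_equal clos_width) in E. rewrite !clos_width_chain in E. simpl in E.
  rewrite <- Hlen, (Forall2_length Hgr), E, Hu0. reflexivity.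
Qed.

Lemma var_not_below_template X l :
  in_Nn n X -> ~ (forall g, Lang P (Var X) g -> Lang P (clos_chain phi l) g).
Proof.
  intros HX Hsub. destruct (lam_lift_free_witness X HX) as (y & Hy & Hfree).
  exact (lam_lift_free_not_template y l Hfree (Hsub y Hy)).
Qed.

Lemma template_shape_Lam p (a s : gterm) :
  all_nts (in_Nn n) p -> (forall g, Lang P p g -> Lang P phi g) ->
  Lang P p (Lam (Clos a (Lift s))) -> exists alpha sigma, p = Lam (Clos alpha (Lift sigma)).
Proof.
  intros Hn Hsub Hp.
  destruct (Lang_to_Lam Hp) as [[X ->] | (q & -> & Hq)];
    [destruct (var_not_below_template X [] Hn Hsub)|].
  destruct (Lang_to_Clos Hq) as [[X ->] | (alpha & q' & -> & Ha & Hq')].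
  - destruct (lam_lift_free_witness X Hn) as (y & Hy & Hfree).
    destruct (Lang_phi_inv (Hsub _ (Lang_Lam Hy))) as (g1 & g2 & [= ->]).
    simpl in Hfree. rewrite Bool.andb_false_r in Hfree. discriminate.
  - destruct (Lang_to_Lift Hq') as [[X ->] | (sigma & -> & _)]; [|eauto].
    destruct (lam_lift_free_witness X (proj2 Hn)) as (y & Hy & Hfree).
    destruct (Lang_phi_inv (Hsub _ (Lang_Lam (Lang_Clos Ha Hy)))) as (g1 & g2 & [= _ ->]).
    discriminate.
Qed.

Lemma template_shape p (a s : gterm) R :
  all_nts (in_Nn n) p ->
  (forall g, Lang P p g -> Lang P (clos_chain phi (repeat (Var NS) (length R))) g) ->
  Lang P p (clos_chain (Lam (Clos a (Lift s))) R) ->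
  exists alpha sigma sigmas,
    length sigmas = length R /\ p = clos_chain (Lam (Clos alpha (Lift sigma))) sigmas.
Proof.
  revert p; induction R as [|g R IH] using rev_ind; intros p Hn Hsub Hp.
  - destruct (template_shape_Lam p a s Hn Hsub Hp) as (alpha & sigma & ->).
    exists alpha, sigma, []. split; reflexivity.
  - assert (Erep : repeat (Var NS) (length (R ++ [g])) = repeat (Var NS) (length R) ++ [Var NS])
      by (rewrite length_app, repeat_app; reflexivity).
    rewrite Erep in Hsub. rewrite clos_chain_snoc in Hp.
    destruct (Lang_to_Clos Hp) as [[X ->] | (p1 & p2 & -> & Hp1 & Hp2)].
    { destruct (var_not_below_template X _ Hn Hsub). }
    rewrite clos_chain_snoc in Hsub.
    assert (Hsub1 : forall g1, Lang P p1 g1 ->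
                      Lang P (clos_chain phi (repeat (Var NS) (length R))) g1).
    { intros g1 Hg1.
      destruct (Lang_Clos_inv (Hsub _ (Lang_Clos Hg1 Hp2))) as (x & y & [= <- <-] & Hx & _).
      exact Hx. }
    destruct (IH p1 (proj1 Hn) Hsub1 Hp1) as (alpha & sigma & sigmas & Hl & ->).
    exists alpha, sigma, (sigmas ++ [p2]).
    rewrite clos_chain_snoc, !length_app, Hl. split; reflexivity.
Qed.

Variable Pi : tree nt -> list (tree nt).
Hypothesis HPi : forall gamma, In (NG n, gamma) P ->
  is_intersection_partition n P (Pi gamma) gamma (template_target phi gamma).

Lemma Delta_sound p g : Delta n P Pi p -> Lang P p g -> Lang P (Var (NG n)) g.
Proof.
  intros (gamma & Hin & Hp) Hg. apply (Lang_Var Hin).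
  destruct (HPi gamma Hin) as (_ & _ & Hcov). apply Hcov. eauto.
Qed.

Lemma Delta_unique p p' g :
  Delta n P Pi p -> Delta n P Pi p' -> Lang P p g -> Lang P p' g -> p = p'.
Proof.
  intros (gamma & Hin & Hp) (gamma' & Hin' & Hp') Hg Hg'.
  destruct (HPi gamma Hin) as (_ & Hdisj & Hcov).
  destruct (HPi gamma' Hin') as (_ & _ & Hcov').
  assert (Egamma : gamma = gamma').
  { apply (unambiguous_production (P := P) (NG n) gamma gamma' g); try assumption.
    - exact (NG_unambiguous n (le_n n)).
    - apply Hcov. eauto.
    - apply Hcov'. eauto. }
  subst gamma'. destruct (classic (p = p')) as [|Hne]; [assumption|].
  destruct (Hdisj p p' Hp Hp' Hne g (conj Hg Hg')).
Qed.

Lemma Delta_cover (a s : gterm) ss :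
  Lang P (Var (NG n)) (clos_chain (Lam (Clos a (Lift s))) ss) ->
  exists p alpha sigma sigmas,
    Delta n P Pi p /\ Lang P p (clos_chain (Lam (Clos a (Lift s))) ss) /\
    length sigmas = length ss /\ p = clos_chain (Lam (Clos alpha (Lift sigma))) sigmas.
Proof.
  intros Ht. destruct (Lang_Var_inv Ht) as (gamma & Hin & Hgamma).
  destruct (HPi gamma Hin) as (Hnts & _ & Hcov).
  assert (Etpl : template_target phi gamma = clos_chain phi (repeat (Var NS) (length ss))).
  { unfold template_target. rewrite (production_width gamma _ ss Hin Hgamma).
    change (clos_width phi) with 0. now rewrite Nat.sub_0_r. }
  rewrite Etpl in Hcov.
  destruct (proj1 (Lang_NG n _ (le_n n)) Ht) as [Hsorted _].
  assert (Htpl := Lang_template_chain Lambda_included a s ss Hsorted).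
  destruct (proj2 (Hcov _) (conj Hgamma Htpl)) as (p & Hp & Hpt).
  destruct (template_shape p a s ss (Hnts p Hp)) as (alpha & sigma & sigmas & Hl & Ep);
    [intros g Hg; apply (proj1 (Hcov g)); eauto | exact Hpt |].
  exists p, alpha, sigma, sigmas.
  repeat split; [exists gamma; auto | exact Hpt | exact Hl | exact Ep].
Qed.

End ReductionGrammar.

Theorem mainTheorem7 (n : nat) (P : grammar)
  (HG : reduction_grammar n P) (Hsimple : simple n P) (Hverbose : verbose P)
  (Pi : tree nt -> list (tree nt))
  (HPi : forall gamma, In (NG n, gamma) P ->
           is_intersection_partition n P (Pi gamma) gamma
             (template_target phi gamma))
  (a s : gterm) (ss : list gterm)
  (Ht : lterm (clos_chain (Clos (Lam a) s) ss)) :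
  normalises_in (S n) (clos_chain (Clos (Lam a) s) ss) <->
  exists! p : tree nt,
    Delta n P Pi p /\
    exists (alpha sigma : tree nt) (sigmas : list (tree nt)),
      length sigmas = length ss /\
      p = clos_chain (Lam (Clos alpha (Lift sigma))) sigmas /\
      Lang P (clos_chain (Clos (Lam alpha) sigma) sigmas)
        (clos_chain (Clos (Lam a) s) ss).
Proof.
  set (t' := clos_chain (Lam (Clos a (Lift s))) ss).
  assert (Ht' : lterm t').
  { apply lterm_clos_chain in Ht as [Hhead Hss]. apply lterm_clos_chain. split; assumption. }
  rewrite (normalises_in_step n _ t' (lo_step_beta_chain a s ss)).
  transitivity (Lang P (Var (NG n)) t'); [rewrite (Lang_NG n P HG n t' (le_n n)); tauto|].
  split.
  - intros Hg.
    destruct (Delta_cover n P HG Hsimple Hverbose Pi HPi a s ss Hg)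
      as (p & alpha & sigma & sigmas & HD & Hp & Hl & ->).
    exists (clos_chain (Lam (Clos alpha (Lift sigma))) sigmas). split.
    + split; [exact HD|]. exists alpha, sigma, sigmas. split; [exact Hl|]. split; [reflexivity|].
      now apply Lang_clos_chain_contract.
    + intros p' (HD' & alpha' & sigma' & sigmas' & Hl' & -> & Hp').
      apply (Delta_unique n P HG Pi HPi _ _ _ HD HD' Hp).
      now apply Lang_clos_chain_contract.
  - intros (p & (HD & alpha & sigma & sigmas & Hl & -> & Hp) & _).
    apply (Delta_sound n P Pi HPi _ _ HD).
    now apply Lang_clos_chain_contract.
Qed.
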